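(* For any one of the relaying schemes described in the context (decode-and-forward, compress-and-forward, amplify-and-forward, compute-and-forward, or hybrid), using the concavified rate regions, the maximum epoch sum-rate $$R_s(p_1,p_2,p_3)=\max\{R_1+R_2 : (R_1,R_2)\in\mathcal{R}_{HD}(p_1,p_2,p_3,\Delta),\ 0\le\Delta\le1\}$$ for half-duplex nodes, respectively $R_s(p_1,p_2,p_3)=\max\{R_1+R_2:(R_1,R_2)\in\mathcal{R}_{FD}(p_1,p_2,p_3)\}$ for full-duplex nodes, is jointly concave in the transmit powers $(p_1,p_2,p_3)\in[0,\infty)^3$.
   Context: Nodes $T_1,T_2$ exchange messages through relay $T_3$ (no direct link), with channel power gains $h_{13}>0$, $h_{23}>0$ and unit-variance noise at every node. $C(x)=\tfrac12\log(1+x)$, $\log^+(x)=\max\{\log x,0\}$, $\bar\Delta=1-\Delta$ for $\Delta\in[0,1]$, with the convention $\Delta C(x/\Delta)=0$ when $\Delta=0$. Base rate regions (powers $p_1,p_2,p_3\ge0$): - Decode-and-forward, half duplex: $R_1\le\min\{\Delta C(h_{13}p_1/\Delta),\bar\Delta C(h_{23}p_3/\bar\Delta)\}$, $R_2\le\min\{\Delta C(h_{23}p_2/\Delta),\bar\Delta C(h_{13}p_3/\bar\Delta)\}$, $R_1+R_2\le \Delta C((h_{13}p_1+h_{23}p_2)/\Delta)$; full duplex: the same with $\Delta,\bar\Delta$ replaced by $1$. - Compress-and-forward, half duplex: with $P_y=(h_{13}p_1+h_{23}p_2)/\Delta+1$, $R_1\le \Delta C\big(\frac{\sigma^2 h_{13}p_1/\Delta}{P_{\hat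 y}P_y^2-\sigma^2(P_y-1)}\big)$, $R_2\le \Delta C\big(\frac{\sigma^2 h_{23}p_2/\Delta}{P_{\hat y}P_y^2-\sigma^2(P_y-1)}\big)$ for some $P_{\hat y}\ge0,\sigma\ge0$; full duplex: $R_1\le C(h_{13}p_1/(1+\sigma_c^2))$, $R_2\le C(h_{23}p_2/(1+\sigma_c^2))$ with $\sigma_c^2=\max\{(1+h_{23}p_2)2^{-2R_3},(1+h_{13}p_1)2^{-2R_3}\}$, $R_3=\min\{C(h_{13}p_3),C(h_{23}p_3)\}$. - Amplify-and-forward: $R_1\le \Delta C\big(\frac{h_{13}h_{23}p_1p_3}{\Delta(h_{13}p_1+h_{23}(p_2+p_3)+\Delta)}\big)$, $R_2\le \Delta C\big(\frac{h_{13}h_{23}p_2p_3}{\Delta(h_{23}p_2+h_{13}(p_1+p_3)+\Delta)}\big)$ with $\Delta=1/2$ (half duplex) or $\Delta=1$ (full duplex). - Compute-and-forward, half duplex: $R_1\le\min\{\tfrac{\Delta}{2}\log^+(\tfrac{p_1}{p_1+p_2}+\tfrac{h_{13}p_1}{\Delta}),\bar\Delta C(h_{23}p_3/\bar\Delta)\}$, $R_2\le\min\{\tfrac{\Delta}{2}\log^+(\tfrac{p_2}{p_1+p_2}+\tfrac{h_{23}p_2}{\Delta}),\bar\Delta C(h_{13}p_3/\bar\Delta)\}$; full duplex: same with $\Delta=\bar\Delta=1$. - Hybrid: the union of the four base regions for the same powers. Concavification: the region $\mathcal{R}_{FD}(p_1,p_2,p_3)$ of a scheme is the set of all $(R_1,R_2)=\sum_i\lambda_i(R_{1,i},R_{2,i})$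 with finitely many $\lambda_i\ge0$, $\sum_i\lambda_i=1$, $(R_{1,i},R_{2,i})$ in the (full-duplex) base region at powers $(p_{1,i},p_{2,i},p_{3,i})$ and $\sum_i\lambda_ip_{j,i}\le p_j$ ($j=1,2,3$); $\mathcal{R}_{HD}(p_1,p_2,p_3,\Delta)$ is defined likewise from the half-duplex base regions with time sharing also over $\Delta$ (components with parameters $\Delta_i$ and $\sum_i\lambda_i\Delta_i=\Delta$). *)

From Stdlib Require Import Reals Lra List.
From Coquelicot Require Import Coquelicot.
Open Scope R_scope.

Definition log2 (x : R) : R := ln x / ln 2.
Definition Cap (x : R) : R := / 2 * log2 (1 + x).
Definition logp (x : R) : R := Rmax (log2 x) 0.
Definition scal0 (D y : R) : R := if Req_EM_T D 0 then 0 else D * y.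
Definition dC (D x : R) : R := scal0 D (Cap (x / D)).

Inductive scheme := DF | CF | AF | CmpF | Hybrid.
Inductive duplex := HD | FD.

Definition DF_HD h13 h23 p1 p2 p3 D r1 r2 : Prop :=
  r1 <= dC D (h13 * p1) /\ r1 <= dC (1 - D) (h23 * p3) /\
  r2 <= dC D (h23 * p2) /\ r2 <= dC (1 - D) (h13 * p3) /\
  r1 + r2 <= dC D (h13 * p1 + h23 * p2).

Definition CF_HD h13 h23 p1 p2 (p3 : R) D r1 r2 : Prop :=
  exists Pyh sig, 0 <= Pyh /\ 0 <= sig /\
    let Py := (h13 * p1 + h23 * p2) / D + 1 in
    let Den := Pyh * Py ^ 2 - sig ^ 2 * (Py - 1) in
    r1 <= scal0 D (Cap (sig ^ 2 * (h13 * p1 / D) / Den)) /\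
    r2 <= scal0 D (Cap (sig ^ 2 * (h23 * p2 / D) / Den)).

(* amplify-and-forward with a fixed time fraction d (d = 1/2 HD, d = 1 FD) *)
Definition AF_d (d : R) h13 h23 p1 p2 p3 r1 r2 : Prop :=
  r1 <= d * Cap (h13 * h23 * p1 * p3 / (d * (h13 * p1 + h23 * (p2 + p3) + d))) /\
  r2 <= d * Cap (h13 * h23 * p2 * p3 / (d * (h23 * p2 + h13 * (p1 + p3) + d))).

Definition CmpF_HD h13 h23 p1 p2 p3 D r1 r2 : Prop :=
  r1 <= scal0 D (/ 2 * logp (p1 / (p1 + p2) + h13 * p1 / D)) /\
  r1 <= dC (1 - D) (h23 * p3) /\
  r2 <= scal0 D (/ 2 * logp (p2 / (p1 + p2) + h23 * p2 / D)) /\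
  r2 <= dC (1 - D) (h13 * p3).

Definition DF_FD h13 h23 p1 p2 p3 r1 r2 : Prop :=
  r1 <= Cap (h13 * p1) /\ r1 <= Cap (h23 * p3) /\
  r2 <= Cap (h23 * p2) /\ r2 <= Cap (h13 * p3) /\
  r1 + r2 <= Cap (h13 * p1 + h23 * p2).

Definition CF_FD h13 h23 p1 p2 p3 r1 r2 : Prop :=
  let R3 := Rmin (Cap (h13 * p3)) (Cap (h23 * p3)) in
  let sc := Rmax ((1 + h23 * p2) * Rpower 2 (- 2 * R3))
                 ((1 + h13 * p1) * Rpower 2 (- 2 * R3)) in
  r1 <= Cap (h13 * p1 / (1 + sc)) /\ r2 <= Cap (h23 * p2 / (1 + sc)).

Definition CmpF_FD h13 h23 p1 p2 p3 r1 r2 : Prop :=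
  r1 <= / 2 * logp (p1 / (p1 + p2) + h13 * p1) /\ r1 <= Cap (h23 * p3) /\
  r2 <= / 2 * logp (p2 / (p1 + p2) + h23 * p2) /\ r2 <= Cap (h13 * p3).

(* base region of a scheme; D is ignored in full duplex, and for AF in half
   duplex the time fraction is fixed to 1/2 *)
Definition base (m : duplex) (s : scheme) (h13 h23 p1 p2 p3 D r1 r2 : R) : Prop :=
  0 <= r1 /\ 0 <= r2 /\
  match m with
  | HD =>
    match s with
    | DF => DF_HD h13 h23 p1 p2 p3 D r1 r2
    | CF => CF_HD h13 h23 p1 p2 p3 D r1 r2
    | AF => AF_d (/ 2) h13 h23 p1 p2 p3 r1 r2
    | CmpF => CmpF_HD h13 h23 p1 p2 p3 D r1 r2
    | Hybrid => DF_HD h13 h23 p1 p2 p3 D r1 r2 \/ CF_HD h13 h23 p1 p2 p3 D r1 r2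
                \/ AF_d (/ 2) h13 h23 p1 p2 p3 r1 r2 \/ CmpF_HD h13 h23 p1 p2 p3 D r1 r2
    end
  | FD =>
    match s with
    | DF => DF_FD h13 h23 p1 p2 p3 r1 r2
    | CF => CF_FD h13 h23 p1 p2 p3 r1 r2
    | AF => AF_d 1 h13 h23 p1 p2 p3 r1 r2
    | CmpF => CmpF_FD h13 h23 p1 p2 p3 r1 r2
    | Hybrid => DF_FD h13 h23 p1 p2 p3 r1 r2 \/ CF_FD h13 h23 p1 p2 p3 r1 r2
                \/ AF_d 1 h13 h23 p1 p2 p3 r1 r2 \/ CmpF_FD h13 h23 p1 p2 p3 r1 r2
    end
  end.

(* a time-sharing component: weight, rates, powers, time-share parameter *)
Record tscomp := mkComp { lam : R; cr1 : R; cr2 : R;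
                        cp1 : R; cp2 : R; cp3 : R; cD : R }.

Definition wsum (f : tscomp -> R) (l : list tscomp) : R :=
  fold_right (fun c acc => lam c * f c + acc) 0 l.

Definition conc_region (m : duplex) (s : scheme) (h13 h23 p1 p2 p3 D r1 r2 : R) : Prop :=
  exists l : list tscomp,
    List.Forall (fun c => 0 <= lam c /\ 0 <= cp1 c /\ 0 <= cp2 c /\ 0 <= cp3 c /\
                     (m = HD -> 0 <= cD c <= 1) /\
                     base m s h13 h23 (cp1 c) (cp2 c) (cp3 c) (cD c) (cr1 c) (cr2 c)) l /\
    wsum (fun _ => 1) l = 1 /\
    wsum cp1 l <= p1 /\ wsum cp2 l <= p2 /\ wsum cp3 l <= p3 /\
    (m = HD -> wsum cD l = D) /\
    r1 = wsum cr1 l /\ r2 = wsum cr2 l.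

Definition sum_rate (m : duplex) (s : scheme) (h13 h23 p1 p2 p3 : R) : Rbar :=
  Lub_Rbar (fun x => exists D r1 r2,
    (m = HD -> 0 <= D <= 1) /\
    conc_region m s h13 h23 p1 p2 p3 D r1 r2 /\ x = r1 + r2).

(* Mixing an operating point for powers p with weight t and one for
   powers q with weight 1 - t (concatenate the time-sharing components and
   rescale their weights) is a time-sharing scheme for the averaged powers and
   the averaged Delta, with the averaged rates; hence
   t S(p) + (1 - t) S(q) is contained in S(t p + (1 - t) q).  Every S(p)
   contains 0, since each base region contains the origin at zero power, and
   the inequality passes to suprema. *)

From Stdlib Require Import Reals Lra List.
From Coquelicot Require Import Coquelicot.
Open Scope R_scope.

Lemma Rbar_mult_Lub_Rbar_le (E : R -> Prop) (t k x0 : R) :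
  0 <= t -> E x0 -> (forall x, E x -> t * x <= k) ->
  exists a, Rbar_mult t (Lub_Rbar E) = Finite a /\ a <= k.
Proof.
  intros Ht Ex0 Hk.
  destruct (Req_dec t 0) as [-> | Htpos].
  { exists 0; rewrite Rbar_mult_0_l; split; [reflexivity |].
    specialize (Hk x0 Ex0); lra. }
  destruct (Lub_Rbar_correct E) as [Hub Hlub].
  assert (Hle : Rbar_le (Lub_Rbar E) (k / t)).
  { apply Hlub; intros x Ex; simpl.
    apply Rmult_le_reg_l with t; [lra |].
    field_simplify; [apply Hk |]; auto. }
  specialize (Hub x0 Ex0).
  destruct (Lub_Rbar E) as [a | |]; simpl in *; try tauto.
  exists (t * a); split; [reflexivity |].
  apply Rmult_le_compat_l with (r := t) in Hle; [| lra].
  field_simplify in Hle; lra.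
Qed.

Lemma Lub_Rbar_convex_le (A B C : R -> Prop) (t x0 y0 : R) :
  0 <= t <= 1 -> A x0 -> B y0 ->
  (forall x y, A x -> B y -> C (t * x + (1 - t) * y)) ->
  Rbar_le (Rbar_plus (Rbar_mult t (Lub_Rbar A)) (Rbar_mult (1 - t) (Lub_Rbar B)))
          (Lub_Rbar C).
Proof.
  intros Ht Ax0 By0 HC.
  destruct (Lub_Rbar_correct C) as [HubC _].
  assert (HCx0y0 := HubC _ (HC _ _ Ax0 By0)).
  destruct (Lub_Rbar C) as [c | |]; simpl in HCx0y0; try tauto.
  2: destruct (Rbar_plus _ _); exact I.
  assert (Hc : forall x y, A x -> B y -> t * x + (1 - t) * y <= c)
    by (intros x y Ax By; exact (HubC _ (HC _ _ Ax By))).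
  (* [t * sup A] is a finite [a] below [c - (1 - t) * y] for every [y] in [B]. *)
  destruct (Rbar_mult_Lub_Rbar_le A t (c - (1 - t) * y0) x0) as [a [Ea _]];
    [lra | exact Ax0 | intros x Ax; specialize (Hc x y0 Ax By0); lra |].
  destruct (Rbar_mult_Lub_Rbar_le B (1 - t) (c - a) y0) as [b [Eb Hb]];
    [lra | exact By0 | |].
  { intros y By.
    destruct (Rbar_mult_Lub_Rbar_le A t (c - (1 - t) * y) x0) as [a' [Ea' Ha']];
      [lra | exact Ax0 | intros x Ax; specialize (Hc x y Ax By); lra |].
    rewrite Ea in Ea'; injection Ea' as <-; lra. }
  rewrite Ea, Eb; simpl; lra.
Qed.

Lemma Cap_0 : Cap 0 = 0.
Proof. unfold Cap, log2; rewrite Rplus_0_r, ln_1; unfold Rdiv; ring. Qed.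

Lemma scal0_0_l (y : R) : scal0 0 y = 0.
Proof. unfold scal0; destruct Req_EM_T; lra. Qed.

Lemma dC_0_r (D : R) : dC D 0 = 0.
Proof. unfold dC, scal0, Rdiv; rewrite Rmult_0_l, Cap_0; destruct Req_EM_T; lra. Qed.

Lemma base_zero m s h13 h23 : base m s h13 h23 0 0 0 0 0 0.
Proof.
  assert (Hlogp : forall x, 0 <= / 2 * logp x)
    by (intros x; apply Rmult_le_pos; [lra | apply Rmax_r]).
  assert (HCF : CF_HD h13 h23 0 0 0 0 0 0)
    by (exists 0, 0; simpl; rewrite !scal0_0_l; lra).
  unfold base, DF_HD, AF_d, CmpF_HD, DF_FD, CF_FD, CmpF_FD, Rdiv.
  destruct m, s; simpl; rewrite ?Rmult_0_r, ?Rmult_0_l, ?Rplus_0_r, ?scal0_0_l, ?dC_0_r, ?Cap_0;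
    repeat split; auto; lra.
Qed.

Definition reweight (w : R) (c : tscomp) : tscomp :=
  mkComp (w * lam c) (cr1 c) (cr2 c) (cp1 c) (cp2 c) (cp3 c) (cD c).

Lemma wsum_app (f : tscomp -> R) (l1 l2 : list tscomp) :
  wsum f (l1 ++ l2) = wsum f l1 + wsum f l2.
Proof. induction l1 as [| c l1 IH]; simpl; [ring | rewrite IH; ring]. Qed.

Lemma wsum_map_reweight (f : tscomp -> R) (w : R) (l : list tscomp) :
  (forall c, f (reweight w c) = f c) -> wsum f (map (reweight w) l) = w * wsum f l.
Proof.
  intros Hf; induction l as [| c l IH]; simpl; [ring | rewrite IH, Hf; simpl; ring].
Qed.

Lemma wsum_mix (f : tscomp -> R) (t : R) (l1 l2 : list tscomp) :
  (forall w c, f (reweight w c) = f c) ->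
  wsum f (map (reweight t) l1 ++ map (reweight (1 - t)) l2)
  = t * wsum f l1 + (1 - t) * wsum f l2.
Proof. intros Hf; rewrite wsum_app, !wsum_map_reweight; auto. Qed.

Lemma convex_comb_le (t a b c d : R) :
  0 <= t <= 1 -> a <= b -> c <= d -> t * a + (1 - t) * c <= t * b + (1 - t) * d.
Proof. intros Ht Hab Hcd; apply Rplus_le_compat; apply Rmult_le_compat_l; lra. Qed.

Lemma conc_region_zero m s h13 h23 p1 p2 p3 :
  0 <= p1 -> 0 <= p2 -> 0 <= p3 -> conc_region m s h13 h23 p1 p2 p3 0 0 0.
Proof.
  intros Hp1 Hp2 Hp3; exists (mkComp 1 0 0 0 0 0 0 :: nil); split.
  - constructor; [simpl | constructor].
    repeat (split; [lra || (intros; lra) |]); apply base_zero.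
  - unfold wsum; simpl; repeat split; lra.
Qed.

Lemma conc_region_mix m s h13 h23 p1 p2 p3 q1 q2 q3 D1 D2 a1 a2 b1 b2 t :
  0 <= t <= 1 ->
  conc_region m s h13 h23 p1 p2 p3 D1 a1 b1 ->
  conc_region m s h13 h23 q1 q2 q3 D2 a2 b2 ->
  conc_region m s h13 h23 (t * p1 + (1 - t) * q1) (t * p2 + (1 - t) * q2)
    (t * p3 + (1 - t) * q3) (t * D1 + (1 - t) * D2)
    (t * a1 + (1 - t) * a2) (t * b1 + (1 - t) * b2).
Proof.
  intros Ht [l1 [F1 [W1 [X1 [Y1 [Z1 [E1 [-> ->]]]]]]]]
            [l2 [F2 [W2 [X2 [Y2 [Z2 [E2 [-> ->]]]]]]]].
  exists (map (reweight t) l1 ++ map (reweight (1 - t)) l2).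
  rewrite !wsum_mix by reflexivity.
  repeat split; try apply convex_comb_le; auto.
  - apply Forall_app; split; apply Forall_map;
      [eapply Forall_impl; [| exact F1] | eapply Forall_impl; [| exact F2]];
      intros c [Hlam Hc]; (split; [simpl; apply Rmult_le_pos; lra | exact Hc]).
  - rewrite W1, W2; ring.
  - intros HHD; rewrite (E1 HHD), (E2 HHD); ring.
Qed.

Definition sum_rate_set (m : duplex) (s : scheme) (h13 h23 p1 p2 p3 : R) : R -> Prop :=
  fun x => exists D r1 r2,
    (m = HD -> 0 <= D <= 1) /\
    conc_region m s h13 h23 p1 p2 p3 D r1 r2 /\ x = r1 + r2.

Lemma sum_rate_set_zero m s h13 h23 p1 p2 p3 :
  0 <= p1 -> 0 <= p2 -> 0 <= p3 -> sum_rate_set m s h13 h23 p1 p2 p3 0.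
Proof.
  intros Hp1 Hp2 Hp3; exists 0, 0, 0.
  split; [intros; lra | split; [apply conc_region_zero; auto | ring]].
Qed.

Lemma sum_rate_set_mix m s h13 h23 p1 p2 p3 q1 q2 q3 t x y :
  0 <= t <= 1 ->
  sum_rate_set m s h13 h23 p1 p2 p3 x -> sum_rate_set m s h13 h23 q1 q2 q3 y ->
  sum_rate_set m s h13 h23 (t * p1 + (1 - t) * q1) (t * p2 + (1 - t) * q2)
    (t * p3 + (1 - t) * q3) (t * x + (1 - t) * y).
Proof.
  intros Ht [D1 [a1 [b1 [HD1 [H1 ->]]]]] [D2 [a2 [b2 [HD2 [H2 ->]]]]].
  exists (t * D1 + (1 - t) * D2), (t * a1 + (1 - t) * a2), (t * b1 + (1 - t) * b2).
  split; [| split; [apply conc_region_mix; auto | ring]].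
  intros HHD; specialize (HD1 HHD); specialize (HD2 HHD); split.
  - replace 0 with (t * 0 + (1 - t) * 0) by ring; apply convex_comb_le; lra.
  - replace 1 with (t * 1 + (1 - t) * 1) at 2 by ring; apply convex_comb_le; lra.
Qed.

Theorem lemma2 (m : duplex) (s : scheme) (h13 h23 : R) :
  0 < h13 -> 0 < h23 ->
  forall (p1 p2 p3 q1 q2 q3 t : R),
    0 <= p1 -> 0 <= p2 -> 0 <= p3 -> 0 <= q1 -> 0 <= q2 -> 0 <= q3 ->
    0 <= t <= 1 ->
    Rbar_le
      (Rbar_plus (Rbar_mult t (sum_rate m s h13 h23 p1 p2 p3))
                 (Rbar_mult (1 - t) (sum_rate m s h13 h23 q1 q2 q3)))
      (sum_rate m s h13 h23 (t * p1 + (1 - t) * q1) (t * p2 + (1 - t) * q2)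
                            (t * p3 + (1 - t) * q3)).
Proof.
  intros _ _ p1 p2 p3 q1 q2 q3 t Hp1 Hp2 Hp3 Hq1 Hq2 Hq3 Ht.
  apply (Lub_Rbar_convex_le _ _ _ t 0 0 Ht).
  - exact (sum_rate_set_zero m s h13 h23 p1 p2 p3 Hp1 Hp2 Hp3).
  - exact (sum_rate_set_zero m s h13 h23 q1 q2 q3 Hq1 Hq2 Hq3).
  - intros x y; apply sum_rate_set_mix; exact Ht.
Qed.
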